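(* Let $0<c<1$. There exists a set $A\subseteq\mathbb{N}$ such that $R_A(n)=cn+O(\sqrt{n}\log^{1/2}n)$ as $n\to\infty$.
   Context: $\mathbb{N}$ denotes the set of non-negative integers. For $A\subseteq\mathbb{N}$, $R_A(n)$ denotes the number of ordered pairs $(a,a')$ with $a,a'\in A$ and $a+a'=n$. *)

From Stdlib Require Import Reals Lra Lia List.
Open Scope R_scope.

(* R_A(n) = number of ordered pairs (a, a') with a, a' in A and a + a' = n;
   such a pair is determined by a in {0,...,n} with a' = n - a. *)
Definition RA (A : nat -> bool) (n : nat) : nat :=
  length (filter (fun a => andb (A a) (A (n - a)%nat)) (seq 0 (S n))).

From Stdlib Require Import Reals Lra Lia List FunctionalExtensionality Classical ClassicalEpsilon.
Open Scope R_scope.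

(* Put each integer in [A] independently with probability [p = sqrt c]. Up to the
   middle term, [R_A(n)] is twice the number of the [h = half n] disjoint pairs
   [{i, n - i}] lying in [A], a binomial variable with mean [c h]. A Chernoff
   bound with [λ = sqrt (ln n / h)] shows that a deviation beyond
   [4 sqrt (h ln n)] has probability at most [2 / n^2], and
   [Σ_(n >= 4) 2 / n^2 < 1]; so for every [M] some [A] satisfies the bound for all
   [4 <= n <= M]. The bound at [n] only depends on [A ∩ [0, n]], and a König-type
   compactness argument yields one [A] that is good for every [n]. *)

Definition update (x : nat -> bool) (a : nat) (b : bool) : nat -> bool :=
  fun i => if Nat.eqb i a then b else x i.

Lemma update_eq x a b : update x a b a = b.
Proof. unfold update; now rewrite Nat.eqb_refl. Qed.

Lemma update_neq x a b i : i <> a -> update x a b i = x i.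
Proof. intros H; unfold update; destruct (Nat.eqb_spec i a); congruence. Qed.

Lemma update_comm x a b a' b' :
  a <> a' -> update (update x a b) a' b' = update (update x a' b') a b.
Proof.
  intros H; apply functional_extensionality; intros i; unfold update.
  destruct (Nat.eqb_spec i a'), (Nat.eqb_spec i a); subst; congruence.
Qed.

Definition b2R (b : bool) : R := if b then 1 else 0.

Fixpoint rsum (f : nat -> R) (m : nat) : R :=
  match m with O => 0 | S m' => rsum f m' + f m' end.

Lemma rsum_ext f g m : (forall i, (i < m)%nat -> f i = g i) -> rsum f m = rsum g m.
Proof.
  induction m as [|m IH]; intros H; simpl; auto.
  rewrite IH by (intros; apply H; lia); rewrite H by lia; reflexivity.
Qed.

Lemma rsum_le f g m : (forall i, (i < m)%nat -> f i <= g i) -> rsum f m <= rsum g m.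
Proof.
  induction m as [|m IH]; intros H; simpl; [lra|].
  pose proof (IH (fun i Hi => H i ltac:(lia))); pose proof (H m ltac:(lia)); lra.
Qed.

Lemma rsum_const r m : rsum (fun _ => r) m = INR m * r.
Proof. induction m as [|m IH]; simpl rsum; [simpl; ring|]. rewrite IH, S_INR; ring. Qed.

Lemma rsum_ge_term f m i :
  (forall j, (j < m)%nat -> 0 <= f j) -> (i < m)%nat -> f i <= rsum f m.
Proof.
  induction m as [|m IH]; intros Hf Hi; [lia|]; simpl.
  assert (Hsum : 0 <= rsum f m).
  { rewrite <- (Rmult_0_r (INR m)), <- rsum_const; apply rsum_le; intros; apply Hf; lia. }
  pose proof (Hf m (Nat.lt_succ_diag_r m)).
  destruct (Nat.eq_dec i m) as [->|Hne]; [lra|].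
  assert (f i <= rsum f m) by (apply IH; [intros; apply Hf|]; lia).
  lra.
Qed.

Lemma rsum_split f a b : rsum f (a + b) = rsum f a + rsum (fun i => f (a + i)%nat) b.
Proof.
  induction b as [|b IH]; simpl; [rewrite Nat.add_0_r; ring|].
  rewrite Nat.add_succ_r; simpl; rewrite IH; ring.
Qed.

Lemma rsum_rev f m : rsum f m = rsum (fun i => f (m - 1 - i)%nat) m.
Proof.
  induction m as [|m IH]; [reflexivity|].
  rewrite <- Nat.add_1_l at 2; rewrite rsum_split; simpl rsum at 1 2.
  rewrite IH, !Nat.sub_0_r.
  rewrite (rsum_ext (fun i => f (S m - 1 - (1 + i))%nat) (fun i => f (m - 1 - i)%nat))
    by (intros; f_equal; lia).
  ring.
Qed.

(* Expectation of [F] when the bits [0 .. k-1] are independent Bernoulli(p)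
   variables and all later bits are [false]. *)
Fixpoint Ebern (p : R) (k : nat) (F : (nat -> bool) -> R) : R :=
  match k with
  | O => F (fun _ => false)
  | S k' => p * Ebern p k' (fun x => F (update x k' true))
            + (1 - p) * Ebern p k' (fun x => F (update x k' false))
  end.

Definition independent_of (F : (nat -> bool) -> R) (a : nat) :=
  forall x b, F (update x a b) = F x.

Section Bernoulli.
Variable p : R.

Lemma Ebern_ext k F G : (forall x, F x = G x) -> Ebern p k F = Ebern p k G.
Proof.
  revert F G; induction k as [|k IH]; intros F G H; simpl; [apply H|].
  now rewrite (IH _ _ (fun x => H (update x k true))), (IH _ _ (fun x => H (update x k false))).
Qed.

Lemma Ebern_add k F G : Ebern p k (fun x => F x + G x) = Ebern p k F + Ebern p k G.
Proof.
  revert F G; induction k as [|k IH]; intros F G; simpl; [reflexivity|].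
  rewrite (IH (fun x => F (update x k true))), (IH (fun x => F (update x k false))); ring.
Qed.

Lemma Ebern_mulr k F r : Ebern p k (fun x => F x * r) = Ebern p k F * r.
Proof.
  revert F; induction k as [|k IH]; intros F; simpl; [reflexivity|].
  rewrite (IH (fun x => F (update x k true))), (IH (fun x => F (update x k false))); ring.
Qed.

Lemma Ebern_const k r : Ebern p k (fun _ => r) = r.
Proof. induction k as [|k IH]; simpl; [reflexivity|]. rewrite IH; ring. Qed.

Lemma Ebern_rsum k G m :
  Ebern p k (fun x => rsum (fun i => G i x) m) = rsum (fun i => Ebern p k (G i)) m.
Proof.
  induction m as [|m IH]; simpl; [apply Ebern_const|].
  rewrite Ebern_add, IH; reflexivity.
Qed.

Lemma Ebern_mul_bit k F a (g : bool -> R) :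
  (a < k)%nat -> independent_of F a ->
  Ebern p k (fun x => F x * g (x a)) = Ebern p k F * (p * g true + (1 - p) * g false).
Proof.
  revert F; induction k as [|k IH]; intros F Ha HF; [lia|]; simpl.
  destruct (Nat.eq_dec a k) as [->|Hne].
  - rewrite (Ebern_ext k _ (fun x => F x * g true)),
      (Ebern_ext k (fun x => F (update x k false) * _) (fun x => F x * g false)),
      (Ebern_ext k (fun x => F (update x k true)) F),
      (Ebern_ext k (fun x => F (update x k false)) F)
      by (intros; rewrite ?update_eq, HF; reflexivity).
    rewrite !Ebern_mulr; ring.
  - rewrite (Ebern_ext k _ (fun x => F (update x k true) * g (x a))),
      (Ebern_ext k (fun x => F (update x k false) * _) (fun x => F (update x k false) * g (x a)))
      by (intros; rewrite update_neq by auto; reflexivity).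
    rewrite (IH (fun x => F (update x k true))), (IH (fun x => F (update x k false)));
      try lia; try (intros x b; rewrite update_comm by auto; apply HF).
    ring.
Qed.

Lemma Ebern_mul_andb k F a b (g : bool -> R) :
  (a < k)%nat -> (b < k)%nat -> a <> b -> independent_of F a -> independent_of F b ->
  Ebern p k (fun x => F x * g (x a && x b)%bool)
  = Ebern p k F * (p * p * g true + (1 - p * p) * g false).
Proof.
  intros Ha Hb Hab HFa HFb.
  rewrite (Ebern_ext k _ (fun x => F x * b2R (x b) * g (x a)
                                   + F x * (1 - b2R (x b)) * g false))
    by (intros x; destruct (x a), (x b); simpl; ring).
  rewrite Ebern_add, !Ebern_mul_bit; auto.
  - rewrite Ebern_mulr, (Ebern_mul_bit k F b (fun bb => 1 - b2R bb)); auto.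
    simpl; ring.
  - intros x bb; rewrite HFa, update_neq; auto.
Qed.

Hypothesis hp : 0 <= p <= 1.

Lemma Ebern_le k F G : (forall x, F x <= G x) -> Ebern p k F <= Ebern p k G.
Proof.
  revert F G; induction k as [|k IH]; intros F G H; simpl; [apply H|].
  pose proof (IH (fun x => F (update x k true)) (fun x => G (update x k true)) (fun x => H _)).
  pose proof (IH (fun x => F (update x k false)) (fun x => G (update x k false)) (fun x => H _)).
  nra.
Qed.

Lemma Ebern_lt_exists k F r : Ebern p k F < r -> exists x, F x < r.
Proof.
  intros HE; apply NNPP; intros Hno.
  assert (Hge : Ebern p k (fun _ => r) <= Ebern p k F).
  { apply Ebern_le; intros x; apply Rnot_lt_le; intros Hx; eauto. }
  rewrite Ebern_const in Hge; lra.
Qed.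

End Bernoulli.

Lemma RA_ext x y n : (forall i, (i <= n)%nat -> x i = y i) -> RA x n = RA y n.
Proof.
  intros H; unfold RA; f_equal; apply filter_ext_in; intros a Ha.
  apply in_seq in Ha; rewrite !H by lia; reflexivity.
Qed.

Lemma INR_length_filter_seq f s m :
  INR (length (filter f (seq s m))) = rsum (fun i => b2R (f (s + i)%nat)) m.
Proof.
  revert s; induction m as [|m IH]; intros s; [reflexivity|].
  rewrite <- Nat.add_1_l, rsum_split; simpl.
  rewrite (rsum_ext _ (fun i => b2R (f (S s + i)%nat))) by (intros; now rewrite Nat.add_succ_r).
  rewrite <- IH, Nat.add_0_r.
  destruct (f s); simpl length; [rewrite S_INR|]; simpl; ring.
Qed.

Definition half (n : nat) : nat := Nat.div2 (S n).

Lemma half_spec n : (n <= 2 * half n <= S n)%nat.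
Proof.
  unfold half; pose proof (Nat.div2_odd (S n)); destruct (Nat.odd (S n)); simpl in *; lia.
Qed.

(* For [j = half n] this counts the pairs [{i, n - i}] with [i < n - i] inside [x]. *)
Definition pair_count (n j : nat) (x : nat -> bool) : R :=
  rsum (fun i => b2R (x i && x (n - i)%nat)) j.

Lemma pair_count_bounds n j x : 0 <= pair_count n j x <= INR j.
Proof.
  unfold pair_count; split.
  - apply Rle_trans with (rsum (fun _ => 0) j); [rewrite rsum_const; lra|].
    apply rsum_le; intros; unfold b2R; destruct (_ && _)%bool; lra.
  - rewrite <- (Rmult_1_r (INR j)), <- rsum_const.
    apply rsum_le; intros; unfold b2R; destruct (_ && _)%bool; lra.
Qed.

Lemma RA_pair_count x n :
  2 * pair_count n (half n) x <= INR (RA x n) <= 2 * pair_count n (half n) x + 1.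
Proof.
  pose proof (half_spec n) as Hh; set (h := half n) in *.
  set (t := fun i => b2R (x i && x (n - i)%nat)).
  assert (Hsym : forall i, (i <= n)%nat -> t (n - i)%nat = t i).
  { intros i Hi; unfold t; replace (n - (n - i))%nat with i by lia.
    now rewrite Bool.andb_comm. }
  unfold RA; rewrite INR_length_filter_seq; change (rsum (fun i => b2R _) _) with (rsum t (S n)).
  replace (S n) with (h + (S n - h))%nat by lia.
  rewrite rsum_split, (rsum_rev (fun i => t (h + i)%nat)).
  rewrite (rsum_ext (fun i => t (h + (S n - h - 1 - i))%nat) t)
    by (intros i Hi; rewrite <- (Hsym i) by lia; f_equal; lia).
  unfold pair_count; fold t.
  assert (Ht : 0 <= t h <= 1) by (unfold t, b2R; destruct (_ && _)%bool; lra).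
  destruct (Nat.eq_dec (S n - h) h) as [->|Hne]; [lra|].
  replace (S n - h)%nat with (S h) by lia; simpl; lra.
Qed.

Lemma exp_le_quadratic m : m <= 1/2 -> exp m <= 1 + m + 2 * m ^ 2.
Proof.
  intros Hm.
  assert (Hinv : exp m * exp (- m) = 1) by (rewrite <- exp_plus, Rplus_opp_r, exp_0; reflexivity).
  pose proof (exp_ineq1_le (- m)); pose proof (exp_pos m).
  assert (exp m * (1 - m) <= 1) by nra.
  assert (1 <= (1 + m + 2 * m ^ 2) * (1 - m)) by nra.
  nra.
Qed.

Lemma bernoulli_exp_centered q m : 0 <= q <= 1 -> m <= 1/2 ->
  q * exp (m * (1 - q)) + (1 - q) * exp (m * (0 - q)) <= exp (2 * m ^ 2).
Proof.
  intros Hq Hm.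
  replace (exp (m * (1 - q))) with (exp (- (m * q)) * exp m)
    by (rewrite <- exp_plus; f_equal; ring).
  replace (exp (m * (0 - q))) with (exp (- (m * q))) by (f_equal; ring).
  replace (exp (2 * m ^ 2)) with (exp (- (m * q)) * exp (m * q + 2 * m ^ 2))
    by (rewrite <- exp_plus; f_equal; ring).
  pose proof (exp_pos (- (m * q))).
  pose proof (exp_le_quadratic m Hm); pose proof (exp_ineq1_le (m * q + 2 * m ^ 2)).
  assert (q * exp m + (1 - q) <= exp (m * q + 2 * m ^ 2)) by nra.
  nra.
Qed.

Lemma pair_count_update n j a x b :
  (j <= a <= n - j)%nat -> pair_count n j (update x a b) = pair_count n j x.
Proof.
  intros Ha; apply rsum_ext; intros i Hi.
  rewrite !update_neq by lia; reflexivity.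
Qed.

Lemma Ebern_exp_pair_count p k n j m : 0 <= p <= 1 ->
  (n < k)%nat -> (j <= half n)%nat -> m <= 1/2 ->
  Ebern p k (fun x => exp (m * (pair_count n j x - p * p * INR j)))
  <= exp (2 * INR j * m ^ 2).
Proof.
  intros hp Hn Hj Hm; pose proof (half_spec n).
  assert (Hq : 0 <= p * p <= 1) by nra.
  induction j as [|j IH].
  { rewrite (Ebern_ext _ _ _ (fun _ => 1)), Ebern_const.
    - replace (2 * INR 0 * m ^ 2) with 0 by (simpl; ring); rewrite exp_0; lra.
    - intros; unfold pair_count; simpl; rewrite <- exp_0; f_equal; ring. }
  set (F := fun x => exp (m * (pair_count n j x - p * p * INR j))).
  set (g := fun b => exp (m * (b2R b - p * p))).
  rewrite (Ebern_ext _ _ _ (fun x => F x * g (x j && x (n - j)%nat)%bool)).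
  2:{ intros x; unfold F, g, pair_count; simpl rsum; rewrite <- exp_plus, S_INR; f_equal; ring. }
  rewrite Ebern_mul_andb; try lia.
  2, 3: intros x b; unfold F; rewrite pair_count_update by lia; reflexivity.
  unfold g; simpl b2R.
  replace (2 * INR (S j) * m ^ 2) with (2 * INR j * m ^ 2 + 2 * m ^ 2) by (rewrite S_INR; ring).
  rewrite exp_plus.
  apply Rmult_le_compat.
  - apply Rle_trans with (Ebern p k (fun _ => 0)); [rewrite Ebern_const; lra|].
    apply Ebern_le; auto; intros; left; apply exp_pos.
  - pose proof (exp_pos (m * (1 - p * p))); pose proof (exp_pos (m * (0 - p * p))); nra.
  - apply IH; lia.
  - apply bernoulli_exp_centered; auto.
Qed.

Definition rate (n : nat) : R := sqrt (ln (INR n) / INR (half n)).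
Definition threshold (n : nat) : R := 4 * INR (half n) * rate n.
Definition deviation (p : R) (n : nat) (x : nat -> bool) : R :=
  pair_count n (half n) x - p * p * INR (half n).

(* At least [1] as soon as [|deviation p n x| >= threshold n]; when [rate n > 1/2]
   the threshold exceeds [2 * half n], so no deviation needs to be excluded. *)
Definition potential (p : R) (n : nat) (x : nat -> bool) : R :=
  if Rle_dec (rate n) (1/2) then
    exp (rate n * (deviation p n x - threshold n))
    + exp (rate n * (- deviation p n x - threshold n))
  else 0.

Section LargeN.
Variable n : nat.
Hypothesis Hn : (4 <= n)%nat.

Lemma INR_ge_4 : 4 <= INR n.
Proof. replace 4 with (INR 4) by (simpl; ring); apply le_INR; exact Hn. Qed.

Lemma ln_gt_1 : 1 < ln (INR n).
Proof.
  pose proof INR_ge_4; pose proof exp_le_3.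
  rewrite <- ln_exp at 1; apply ln_increasing; [apply exp_pos|lra].
Qed.

Lemma INR_half_bounds : 2 <= INR (half n) /\ INR n <= 2 * INR (half n) <= INR n + 1.
Proof.
  pose proof (half_spec n) as [Hlo Hhi].
  apply le_INR in Hlo, Hhi; rewrite mult_INR in Hlo, Hhi.
  replace (INR 2) with 2 in Hlo, Hhi by (simpl; ring); rewrite S_INR in Hhi.
  pose proof INR_ge_4; lra.
Qed.

Lemma rate_pos : 0 < rate n.
Proof.
  pose proof ln_gt_1; pose proof INR_half_bounds.
  apply sqrt_lt_R0, Rdiv_lt_0_compat; lra.
Qed.

Lemma rate_sqr : rate n ^ 2 * INR (half n) = ln (INR n).
Proof.
  pose proof ln_gt_1; pose proof INR_half_bounds.
  unfold rate; rewrite <- Rsqr_pow2, Rsqr_sqrt; [field; lra|].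
  apply Rmult_le_pos; [lra|left; apply Rinv_0_lt_compat; lra].
Qed.

Lemma threshold_le : threshold n <= 4 * (sqrt (INR n) * sqrt (ln (INR n))).
Proof.
  pose proof ln_gt_1; pose proof INR_half_bounds.
  assert (Hhr : INR (half n) * rate n = sqrt (INR (half n) * ln (INR n))).
  { unfold rate; rewrite <- (sqrt_square (INR (half n))) at 1 by lra.
    rewrite <- sqrt_mult_alt by nra; f_equal; field; lra. }
  unfold threshold; rewrite Rmult_assoc, Hhr, <- sqrt_mult_alt by lra.
  apply Rmult_le_compat_l; [lra|]; apply sqrt_le_1_alt; nra.
Qed.

Lemma sqrt_n_ln_ge_1 : 1 <= sqrt (INR n) * sqrt (ln (INR n)).
Proof.
  pose proof ln_gt_1; pose proof INR_ge_4.
  rewrite <- sqrt_mult_alt, <- sqrt_1 by lra; apply sqrt_le_1_alt; nra.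
Qed.

Lemma RA_close p x : 0 <= p <= 1 -> Rabs (deviation p n x) < threshold n ->
  Rabs (INR (RA x n) - p * p * INR n) <= 10 * sqrt (INR n) * sqrt (ln (INR n)).
Proof.
  intros Hp Hdev.
  pose proof (RA_pair_count x n); pose proof INR_half_bounds; pose proof threshold_le;
    pose proof sqrt_n_ln_ge_1.
  assert (0 <= p * p <= 1) by nra.
  unfold deviation in Hdev; apply Rabs_def2 in Hdev.
  rewrite Rmult_assoc; apply Rabs_le; split; nra.
Qed.

End LargeN.

Section Potential.
Variable p : R.
Hypothesis hp : 0 <= p <= 1.

Lemma potential_nonneg n x : 0 <= potential p n x.
Proof.
  unfold potential; destruct Rle_dec; [|lra].
  pose proof (exp_pos (rate n * (deviation p n x - threshold n))).
  pose proof (exp_pos (rate n * (- deviation p n x - threshold n))); lra.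
Qed.

Lemma deviation_lt_threshold n x : (4 <= n)%nat ->
  potential p n x < 1 -> Rabs (deviation p n x) < threshold n.
Proof.
  intros Hn Hpot.
  pose proof (rate_pos n Hn) as Hr; pose proof (INR_half_bounds n Hn).
  unfold potential in Hpot; destruct Rle_dec as [Hle|Hgt].
  - pose proof (exp_pos (rate n * (deviation p n x - threshold n))).
    pose proof (exp_pos (rate n * (- deviation p n x - threshold n))).
    pose proof (exp_ineq1_le (rate n * (deviation p n x - threshold n))).
    pose proof (exp_ineq1_le (rate n * (- deviation p n x - threshold n))).
    apply Rabs_def1; nra.
  - pose proof (pair_count_bounds n (half n) x).
    assert (0 <= p * p <= 1) by nra.
    unfold deviation, threshold; apply Rabs_def1; nra.
Qed.

Lemma Ebern_potential k n : (4 <= n)%nat -> (n < k)%nat ->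
  Ebern p k (potential p n) <= 2 / INR n ^ 2.
Proof.
  intros Hn Hk.
  pose proof (rate_pos n Hn); pose proof (rate_sqr n Hn) as Hsqr; pose proof (INR_ge_4 n Hn).
  unfold potential; destruct Rle_dec as [Hle|Hgt].
  - set (l := rate n) in *; set (h := INR (half n)) in *.
    rewrite Ebern_add.
    rewrite (Ebern_ext _ _ (fun x => exp (l * (deviation p n x - threshold n)))
               (fun x => exp (l * deviation p n x) * exp (- (l * threshold n)))),
      (Ebern_ext _ _ (fun x => exp (l * (- deviation p n x - threshold n)))
               (fun x => exp (- l * deviation p n x) * exp (- (l * threshold n))))
      by (intros; rewrite <- exp_plus; f_equal; ring).
    rewrite !Ebern_mulr; unfold deviation.
    pose proof (Ebern_exp_pair_count p k n (half n) l hp Hk (le_n _) Hle) as Hpos.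
    pose proof (Ebern_exp_pair_count p k n (half n) (- l) hp Hk (le_n _) ltac:(lra)) as Hneg.
    fold h in Hpos, Hneg |- *; pose proof (exp_pos (- (l * threshold n))).
    apply Rle_trans with (2 * (exp (2 * h * l ^ 2) * exp (- (l * threshold n)))).
    { replace ((- l) ^ 2) with (l ^ 2) in * by ring; nra. }
    rewrite <- exp_plus.
    replace (2 * h * l ^ 2 + - (l * threshold n)) with (- (2 * ln (INR n)))
      by (unfold threshold; fold h l; rewrite <- Hsqr; ring).
    replace (2 * ln (INR n)) with (ln (INR n ^ 2)) by (rewrite ln_pow by lra; simpl; ring).
    rewrite exp_Ropp, exp_ln by (apply pow_lt; lra).
    unfold Rdiv; lra.
  - rewrite Ebern_const; apply Rlt_le, Rdiv_lt_0_compat; [lra|apply pow_lt; lra].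
Qed.

End Potential.

Lemma rsum_inv_sqr_telescope m :
  rsum (fun i => 2 / INR (i + 4) ^ 2) m <= 2 / 3 - 2 / INR (m + 3).
Proof.
  induction m as [|m IH]; [simpl; lra|]; cbn [rsum].
  replace (S m + 3)%nat with (m + 4)%nat by lia.
  assert (Ha : 3 <= INR (m + 3)) by (replace 3 with (INR 3) by (simpl; ring); apply le_INR; lia).
  replace (INR (m + 4)) with (INR (m + 3) + 1) by (rewrite <- S_INR; f_equal; lia).
  assert (2 / (INR (m + 3) + 1) ^ 2 <= 2 / INR (m + 3) - 2 / (INR (m + 3) + 1)).
  { replace (2 / INR (m + 3) - 2 / (INR (m + 3) + 1))
      with (2 / (INR (m + 3) * (INR (m + 3) + 1))) by (field; lra).
    apply Rmult_le_compat_l; [lra|]; apply Rinv_le_contravar; nra. }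
  lra.
Qed.

Lemma exists_RA_close_upto p M : 0 <= p <= 1 -> exists x, forall n, (4 <= n <= M)%nat ->
  Rabs (INR (RA x n) - p * p * INR n) <= 10 * sqrt (INR n) * sqrt (ln (INR n)).
Proof.
  intros Hp.
  set (G := fun x => rsum (fun i => potential p (i + 4) x) (M - 3)).
  assert (HG : Ebern p (S M) G < 1).
  { unfold G; rewrite Ebern_rsum.
    apply Rle_lt_trans with (rsum (fun i => 2 / INR (i + 4) ^ 2) (M - 3)).
    - apply rsum_le; intros i Hi; apply Ebern_potential; auto; lia.
    - pose proof (rsum_inv_sqr_telescope (M - 3)).
      assert (0 < 2 / INR (M - 3 + 3)) by (apply Rdiv_lt_0_compat; [lra|apply lt_0_INR; lia]).
      lra. }
  destruct (Ebern_lt_exists p Hp _ _ _ HG) as [x Hx].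
  exists x; intros n Hn.
  apply RA_close, deviation_lt_threshold; try tauto; try lia.
  replace n with (n - 4 + 4)%nat by lia.
  apply Rle_lt_trans with (G x); [|exact Hx].
  apply (rsum_ge_term (fun i => potential p (i + 4) x)); [|lia].
  intros; apply potential_nonneg.
Qed.

Section Compactness.
Variable P : nat -> (nat -> bool) -> Prop.
Hypothesis P_local :
  forall M x y, (forall i, (i <= M)%nat -> x i = y i) -> P M x -> P M y.
Hypothesis P_antitone : forall M M' x, (M' <= M)%nat -> P M x -> P M' x.
Hypothesis P_finite : forall M, exists x, P M x.

Definition extendable (k : nat) (g : nat -> bool) : Prop :=
  forall M, exists x, (forall i, (i < k)%nat -> x i = g i) /\ P M x.

Lemma extendable_step k g :
  extendable k g -> extendable (S k) (update g k true) \/ extendable (S k) (update g k false).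
Proof.
  intros Hg; apply NNPP; intros Hno; apply not_or_and in Hno as [Ht Hf].
  apply not_all_ex_not in Ht as [Mt Ht]; apply not_all_ex_not in Hf as [Mf Hf].
  destruct (Hg (Nat.max Mt Mf)) as [x [Hx HP]].
  assert (Hext : forall i, (i < S k)%nat -> x i = update g k (x k) i).
  { intros i Hi; unfold update; destruct (Nat.eqb_spec i k); subst; auto; apply Hx; lia. }
  destruct (x k) eqn:Hxk; [apply Ht|apply Hf]; exists x;
    split; auto; apply (P_antitone (Nat.max Mt Mf)); auto; lia.
Qed.

Fixpoint greedy_prefix (k : nat) : nat -> bool :=
  match k with
  | O => fun _ => false
  | S k' => let g := update (greedy_prefix k') k' true in
            if excluded_middle_informative (extendable k g) then g
            else update (greedy_prefix k') k' false
  end.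

Lemma greedy_prefix_extendable k : extendable k (greedy_prefix k).
Proof.
  induction k as [|k IH].
  - intros M; destruct (P_finite M) as [x Hx]; exists x; split; auto; intros; lia.
  - simpl; destruct excluded_middle_informative; auto.
    destruct (extendable_step k _ IH); tauto.
Qed.

Lemma greedy_prefix_stable k i : (i < k)%nat -> greedy_prefix k i = greedy_prefix (S i) i.
Proof.
  induction k as [|k IH]; intros Hi; [lia|].
  destruct (Nat.eq_dec i k) as [->|Hne]; [reflexivity|].
  simpl; destruct excluded_middle_informative; rewrite update_neq by auto; apply IH; lia.
Qed.

Lemma bool_seq_compactness : exists x, forall M, P M x.
Proof.
  exists (fun i => greedy_prefix (S i) i); intros M.
  destruct (greedy_prefix_extendable (S M) M) as [x [Hx HP]].
  apply (P_local M x); auto; intros i Hi.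
  rewrite Hx, greedy_prefix_stable by lia; reflexivity.
Qed.

End Compactness.

Theorem theorem12 (c : R) (hc0 : 0 < c) (hc1 : c < 1) :
  exists A : nat -> bool,
    exists K : R, exists N : nat,
      forall n : nat, (N <= n)%nat ->
        Rabs (INR (RA A n) - c * INR n) <= K * sqrt (INR n) * sqrt (ln (INR n)).
Proof.
  set (p := sqrt c).
  assert (Hp : 0 <= p <= 1).
  { split; [apply sqrt_pos|]; unfold p; rewrite <- sqrt_1; apply sqrt_le_1_alt; lra. }
  assert (Hpp : p * p = c) by (apply sqrt_sqrt; lra).
  set (good := fun M x => forall n, (4 <= n <= M)%nat ->
    Rabs (INR (RA x n) - c * INR n) <= 10 * sqrt (INR n) * sqrt (ln (INR n))).
  destruct (bool_seq_compactness good) as [A HA].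
  - intros M x y Hxy Hx n Hn; rewrite <- (RA_ext x y n) by (intros; apply Hxy; lia).
    apply Hx; exact Hn.
  - intros M M' x HM Hx n Hn; apply Hx; lia.
  - intros M; unfold good; rewrite <- Hpp; apply exists_RA_close_upto; exact Hp.
  - exists A, 10, 4%nat; intros n Hn; apply (HA n); lia.
Qed.
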